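(* The base configuration of the graphic matroid $\mathcal{M}(K_4)$ of the complete graph on four vertices has levelness exactly $3$.
   Context: The graphic matroid $\mathcal{M}(G)$ of a graph $G=(V,E)$ has ground set $E$ and bases the spanning forests of $G$. The base configuration of a matroid $\mathcal{M}=(E,\mathcal{B})$ is $V_{\mathcal{M}}=\{\mathbf{1}_B:B\in\mathcal{B}\}\subset\mathbb{R}^E$. For a finite point set $V$ and an affine function $\ell$ nonnegative on $V$, $\{v\in V:\ell(v)=0\}$ is a face; inclusion-maximal faces different from $V$ are facets and the corresponding $\ell$ facet-defining. The levelness of $V$ is the smallest $k$ such that every facet-defining affine function takes at most $k$ distinct values on $V$. *)

From HB Require Import structures.
From mathcomp Require Import all_boot all_order all_algebra.
From mathcomp Require Import reals.
Set Implicit Arguments. Unset Strict Implicit. Unset Printing Implicit Defensive.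
Import Order.TTheory GRing.Theory Num.Theory.
Local Open Scope ring_scope.

Section Graphic.
(* A (multi)graph: vertex type Vt, edge type Et, each edge has an endpoint set. *)
Variables (Vt Et : finType) (ends : Et -> {set Vt}).

Definition adj (F : {set Et}) : rel Vt :=
  fun u v => (u != v) && [exists e in F, ends e == [set u; v]].

Definition acyclic (F : {set Et}) : Prop :=
  forall e, e \in F -> forall u v, ends e = [set u; v] -> u != v ->
    ~~ connect (adj (F :\ e)) u v.

Definition spanning_forest (F : {set Et}) : Prop :=
  acyclic F /\ forall u v, connect (adj setT) u v -> connect (adj F) u v.
End Graphic.

Section Levelness.
Variables (R : realType) (E : finType).
Definition pt := E -> R.

Definition aff (a : E -> R) (c : R) (x : pt) : R := c + \sum_(e : E) a e * x e.

Definition nonneg_on (P : pt -> Prop) a c : Prop := forall x, P x -> 0 <= aff a c x.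

Definition zero_set (P : pt -> Prop) a c : pt -> Prop := fun x => P x /\ aff a c x = 0.

Definition same_set (A B : pt -> Prop) : Prop := forall x, A x <-> B x.
Definition sub_set (A B : pt -> Prop) : Prop := forall x, A x -> B x.

Definition is_face (P : pt -> Prop) (F : pt -> Prop) : Prop :=
  exists a c, nonneg_on P a c /\ same_set F (zero_set P a c).

Definition is_facet (P F : pt -> Prop) : Prop :=
  [/\ is_face P F, ~ same_set F P &
      forall F', is_face P F' -> ~ same_set F' P -> sub_set F F' -> sub_set F' F].

Definition facet_defining (P : pt -> Prop) a c : Prop :=
  nonneg_on P a c /\ is_facet P (zero_set P a c).

Definition at_most_values (P : pt -> Prop) a c (k : nat) : Prop :=
  exists s : seq R, (size s <= k)%N /\ forall x, P x -> aff a c x \in s.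

Definition levelness_bound (P : pt -> Prop) (k : nat) : Prop :=
  forall a c, facet_defining P a c -> at_most_values P a c k.

Definition is_levelness (P : pt -> Prop) (k : nat) : Prop :=
  levelness_bound P k /\ forall k', levelness_bound P k' -> (k <= k')%N.
End Levelness.

Definition base_configuration (R : realType) (Vt Et : finType)
  (ends : Et -> {set Vt}) : pt R Et -> Prop :=
  fun x => exists B : {set Et}, spanning_forest ends B /\ x = (fun e => (e \in B)%:R).

Definition K4_edge := {A : {set 'I_4} | #|A| == 2%N}.
Definition K4_ends (e : K4_edge) : {set 'I_4} := val e.

From mathcomp Require Import all_boot all_order all_algebra.
From mathcomp Require Import reals.
From Stdlib Require Import FunctionalExtensionality.
Set Implicit Arguments. Unset Strict Implicit. Unset Printing Implicit Defensive.
Import GRing.Theory Num.Theory.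

(* The base configuration consists of the incidence vectors chi_0, ..., chi_15 of the 16
   spanning trees of K_4.  Affine functions respect the exchange relations
   chi_p + chi_q = chi_r + chi_s among them, so the zero pattern of a nonnegative affine
   function is closed under exchanges; an exhaustive search shows that every proper
   exchange-closed pattern lies in the zero set of one of the 16 inequalities x_e >= 0,
   x_e <= 1 and x(T) <= 2 (T a triangle), which are therefore the facets.  The zero trees of
   such a facet together with one tree at level 1 determine every chi_i through exchanges,
   so an affine function vanishing on the facet is, on the trees, a multiple of the facet's
   own function, whose values are 0, 1 and 2; a triangle facet attains all three. *)

Lemma mem_iota0 n i : (i \in iota 0 n) = (i < n).
Proof. by rewrite mem_iota. Qed.

(** * Reachability by breadth-first search *)

Section Reachability.
Variables (r : rel nat) (n : nat).

Definition bfs_step (S : seq nat) : seq nat := S ++ [seq w <- iota 0 n | has (r^~ w) S].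

Definition reach (x : nat) : seq nat := iter n bfs_step [:: x].

Definition closed_under (S : seq nat) : bool :=
  all (fun z => all (fun w => (z \in S) ==> r z w ==> (w \in S)) (iota 0 n)) (iota 0 n).

Lemma reach_ind (Q : nat -> Prop) x :
  Q x -> (forall z w, Q z -> r z w -> w < n -> Q w) -> forall y, y \in reach x -> Q y.
Proof.
move=> Qx QS; suff QI k y : y \in iter k bfs_step [:: x] -> Q y by exact: QI.
elim: k y => [|k IH] y /=; first by rewrite inE => /eqP ->.
rewrite mem_cat => /orP[/IH // | ]; rewrite mem_filter mem_iota.
by case/andP=> /hasP[z /IH Qz rzy] /andP[_ yn]; exact: QS Qz rzy yn.
Qed.

Lemma iota_ord (i : 'I_n) : val i \in iota 0 n.
Proof. by rewrite mem_iota ltn_ord. Qed.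

Lemma closed_under_connect S (u v : 'I_n) :
  closed_under S -> val u \in S -> connect (fun a b : 'I_n => r a b) u v -> val v \in S.
Proof.
move=> /allP clS uS /connectP[p]; elim: p u uS => [|w p IH] u uS /=; first by move=> _ ->.
case/andP=> ruw pw vE; apply: IH pw vE.
have /allP/(_ (val w)) := clS _ (iota_ord u); rewrite iota_ord => /(_ isT).
by rewrite uS ruw.
Qed.

Lemma reach_self x : x \in reach x.
Proof. by rewrite /reach; elim: n => [|k IH]; rewrite ?inE //= mem_cat IH. Qed.

Lemma connect_reach (u v : 'I_n) :
  closed_under (reach u) -> connect (fun a b : 'I_n => r a b) u v = (val v \in reach u).
Proof.
move=> clS; apply/idP/idP; first exact/closed_under_connect/reach_self.
pose Q w := exists2 y : 'I_n, val y = w & connect (fun a b : 'I_n => r a b) u y.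
move=> vS; have [y /val_inj -> //] : Q (val v).
apply: reach_ind vS => [|z w [y <- uy] ryw wn]; first by exists u.
by exists (Ordinal wn) => //; apply: connect_trans uy (connect1 _).
Qed.

End Reachability.

(** * Edges and spanning trees of K_4 *)

Lemma eq_set2_card2 (T : finType) (A : {set T}) (u v : T) :
  #|A| = 2 -> u != v -> (A == [set u; v]) = (u \in A) && (v \in A).
Proof.
move=> cardA uv; apply/eqP/andP => [-> | [uA vA]]; first by rewrite set21 set22.
by apply/eqP; rewrite eq_sym eqEcard cardA cards2 uv subUset !sub1set uA vA.
Qed.

Definition edge_ends : seq (nat * nat) := [:: (0, 1); (0, 2); (0, 3); (1, 2); (1, 3); (2, 3)].

(* The default [(0, 1)] makes [K4e m] a genuine edge for every [m]. *)
Definition end_pair (m : nat) : nat * nat := nth (0, 1) edge_ends m.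

Definition incident (m x : nat) : bool := (x == (end_pair m).1) || (x == (end_pair m).2).

Lemma end_pair_lt m : (end_pair m).1 < (end_pair m).2 < 4.
Proof.
rewrite /end_pair; case: (ltnP m 6) => [|m6]; last by rewrite nth_default.
by case: m => [|[|[|[|[|[|]]]]]].
Qed.

Definition K4e_ends (m : nat) : {set 'I_4} := [set inord (end_pair m).1; inord (end_pair m).2].

Lemma mem_K4e_ends m (x : 'I_4) : (x \in K4e_ends m) = incident m x.
Proof.
have /andP[/ltn_trans lt1 lt2] := end_pair_lt m.
by rewrite !inE -!val_eqE /= !inordK ?lt1.
Qed.

Lemma card_K4e_ends m : #|K4e_ends m| == 2.
Proof.
have /andP[lt12 lt2] := end_pair_lt m.
by rewrite cards2 -val_eqE /= !inordK ?(ltn_trans lt12) // neq_ltn lt12.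
Qed.

Definition K4e (m : nat) : K4_edge := exist _ (K4e_ends m) (card_K4e_ends m).

Lemma K4e_inj m m' : m < 6 -> m' < 6 -> K4e m = K4e m' -> m = m'.
Proof.
move=> lt_m lt_m' /(congr1 K4_ends)/setP eq_ends; apply/eqP.
have incident_inj : all (fun m => all (fun m' =>
    all (fun x => incident m x == incident m' x) (iota 0 4) ==> (m == m')) (iota 0 6)) (iota 0 6)
  by [].
have := allP incident_inj m; rewrite mem_iota0 => /(_ lt_m)/allP/(_ m').
rewrite mem_iota0 => /(_ lt_m')/implyP; apply; apply/allP => x; rewrite mem_iota0 => lt_x.
by have := eq_ends (Ordinal lt_x); rewrite !mem_K4e_ends => ->.
Qed.

Lemma K4e_surj (e : K4_edge) : exists2 m, m < 6 & e = K4e m.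
Proof.
case: e => A cardA; have /cards2P[u [v [uv eA]]] := cardA.
wlog lt_uv : u v uv eA / u < v.
  move=> IH; have [|lt_vu|/val_inj eq_uv] := ltngtP u v; first exact: IH.
    by apply: (IH v u); rewrite 1?eq_sym // eA setUC.
  by rewrite eq_uv eqxx in uv.
have all_listed : all (fun p => all (fun q => (p < q) ==> ((p, q) \in edge_ends)) (iota 0 4))
    (iota 0 4) by [].
have listed : (val u, val v) \in edge_ends.
  by have /allP/(_ _ (iota_ord u))/allP/(_ _ (iota_ord v))/implyP := all_listed; apply.
exists (index (val u, val v) edge_ends); first by rewrite -[6]/(size edge_ends) index_mem.
apply: val_inj => /=; rewrite eA /K4e_ends /end_pair nth_index //=.
by rewrite !inord_val.
Qed.

Definition K4_edges : seq K4_edge := mkseq K4e 6.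

Lemma uniq_K4_edges : uniq K4_edges.
Proof.
by rewrite map_inj_in_uniq ?iota_uniq // => m m'; rewrite !mem_iota0; exact: K4e_inj.
Qed.

Lemma mem_K4_edges e : e \in K4_edges.
Proof. by have [m lt_m ->] := K4e_surj e; apply: map_f; rewrite mem_iota0. Qed.

Definition eid (e : K4_edge) : nat := index e K4_edges.

Lemma eid_lt e : eid e < 6.
Proof. by rewrite -[6](size_mkseq K4e) index_mem mem_K4_edges. Qed.

Lemma eidK e : K4e (eid e) = e.
Proof. by rewrite -(nth_mkseq (K4e 0) K4e (eid_lt e)) nth_index ?mem_K4_edges. Qed.

Lemma K4eK m : m < 6 -> eid (K4e m) = m.
Proof.
by move=> lt_m; rewrite /eid -(nth_mkseq (K4e 0) K4e lt_m) index_uniq ?size_mkseq ?uniq_K4_edges.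
Qed.

Lemma sum_K4_edges (V : nmodType) (F : K4_edge -> V) :
  (\sum_(e : K4_edge) F e = \sum_(m < 6) F (K4e m))%R.
Proof.
rewrite (reindex (fun m : 'I_6 => K4e m)) //.
exists (fun e => inord (eid e)) => [m _ | e _]; last by rewrite inordK ?eidK ?eid_lt.
by apply: val_inj; rewrite /= K4eK // inordK.
Qed.

Definition edge_bits (B : {set K4_edge}) : bitseq := [seq K4e m \in B | m <- iota 0 6].

Lemma size_edge_bits B : size (edge_bits B) = 6.
Proof. by rewrite size_map size_iota. Qed.

Lemma nth_edge_bits B m : m < 6 -> nth false (edge_bits B) m = (K4e m \in B).
Proof. by move=> lt_m; rewrite (nth_map 0) ?size_iota // nth_iota. Qed.

Definition bit_adj (b : bitseq) : rel nat := fun u v =>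
  (u != v) && has (fun m => [&& nth false b m, incident m u & incident m v]) (iota 0 6).

Lemma adjE B (u v : 'I_4) : adj K4_ends B u v = bit_adj (edge_bits B) u v.
Proof.
rewrite /adj /bit_adj val_eqE; have [->//|uv] := eqVneq u v; congr (_ && _).
have ends_m m : (K4_ends (K4e m) == [set u; v]) = incident m u && incident m v.
  by rewrite eq_set2_card2 ?(eqP (card_K4e_ends m)) // !mem_K4e_ends.
apply/existsP/hasP => [[e] | [m]].
  have [m lt_m ->] := K4e_surj e; rewrite ends_m => /andP[eB uv_m].
  by exists m; rewrite ?mem_iota0 ?nth_edge_bits ?eB.
by rewrite mem_iota0 => lt_m; rewrite nth_edge_bits // => eB_uv; exists (K4e m); rewrite ends_m.
Qed.

Fixpoint bitseqs (n : nat) : seq bitseq :=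
  if n is n'.+1 then [seq true :: b | b <- bitseqs n'] ++ [seq false :: b | b <- bitseqs n']
  else [:: [::]].

Lemma mem_bitseqs b : b \in bitseqs (size b).
Proof. by elim: b => [|[] b IH] //=; rewrite mem_cat (map_f _ IH) ?orbT. Qed.

Lemma reach_closed_K4 :
  all (fun b => all (fun x => closed_under (bit_adj b) 4 (reach (bit_adj b) 4 x)) (iota 0 4))
    (bitseqs 6).
Proof. by vm_compute. Qed.

Lemma connect_adjE B (u v : 'I_4) :
  connect (adj K4_ends B) u v = (val v \in reach (bit_adj (edge_bits B)) 4 u).
Proof.
rewrite -connect_reach; first by apply: eq_connect => x y; rewrite adjE.
have /allP/(_ (edge_bits B)) := reach_closed_K4.
by rewrite -(size_edge_bits B) mem_bitseqs => /(_ isT)/allP; apply; rewrite iota_ord.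
Qed.

Definition delete_bit (b : bitseq) (m : nat) : bitseq :=
  [seq nth false b j && (j != m) | j <- iota 0 (size b)].

Lemma edge_bits_delete B m : m < 6 -> edge_bits (B :\ K4e m) = delete_bit (edge_bits B) m.
Proof.
move=> lt_m; rewrite /delete_bit size_edge_bits; apply/eq_in_map => j; rewrite mem_iota0 => lt_j.
rewrite in_setD1 nth_edge_bits // andbC; congr (_ && _).
by congr negb; apply/eqP/eqP => [/K4e_inj -> | ->].
Qed.

Definition bit_acyclic (b : bitseq) : bool :=
  all (fun m => nth false b m ==> all (fun u => all (fun v =>
      [&& u != v, incident m u & incident m v] ==>
      (v \notin reach (bit_adj (delete_bit b m)) 4 u)) (iota 0 4)) (iota 0 4)) (iota 0 6).

Definition bit_connected (b : bitseq) : bool :=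
  all (fun u => all (fun v => v \in reach (bit_adj b) 4 u) (iota 0 4)) (iota 0 4).

Definition spanning_tree_bits (b : bitseq) : bool := bit_acyclic b && bit_connected b.

Lemma acyclicE B : acyclic K4_ends B <-> bit_acyclic (edge_bits B).
Proof.
have ends_m m (u v : 'I_4) : u != v ->
    (K4_ends (K4e m) == [set u; v]) = incident m u && incident m v.
  by move=> uv; rewrite eq_set2_card2 ?(eqP (card_K4e_ends m)) // !mem_K4e_ends.
split=> [acB | /allP acB e eB u v ends_e uv].
  apply/allP => m; rewrite mem_iota0 => lt_m; rewrite nth_edge_bits //; apply/implyP => mB.
  apply/allP => u; rewrite mem_iota0 => lt_u; apply/allP => v; rewrite mem_iota0 => lt_v.
  apply/implyP => /and3P[uv um vm].
  have uv' : inord u != inord v :> 'I_4 by rewrite -val_eqE /= !inordK.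
  have := acB _ mB (inord u) (inord v).
  rewrite connect_adjE edge_bits_delete // /= !inordK //; apply=> //.
  by apply/eqP; rewrite ends_m //= !inordK // um vm.
move: eB ends_e; have [m lt_m ->] := K4e_surj e => mB /eqP; rewrite ends_m // => /andP[um vm].
rewrite connect_adjE edge_bits_delete //.
have := acB m; rewrite mem_iota0 lt_m nth_edge_bits // mB => /(_ isT)/allP/(_ u (iota_ord u)).
by move=> /allP/(_ v (iota_ord v))/implyP; apply; rewrite um vm !andbT.
Qed.

Lemma connect_K4 (u v : 'I_4) : connect (adj K4_ends setT) u v.
Proof.
have edge_bits_setT : edge_bits setT = nseq 6 true by rewrite /edge_bits /= !inE.
have K4_connected : bit_connected (nseq 6 true) by vm_compute.
rewrite connect_adjE edge_bits_setT.
by have /allP/(_ _ (iota_ord u))/allP := K4_connected; apply; rewrite iota_ord.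
Qed.

Lemma spanning_forestE B : spanning_forest K4_ends B <-> spanning_tree_bits (edge_bits B).
Proof.
rewrite /spanning_forest /spanning_tree_bits acyclicE.
split=> [[-> spB] | /andP[acB /allP spB]]; last split=> // u v _.
  apply/allP => u; rewrite mem_iota0 => lt_u; apply/allP => v; rewrite mem_iota0 => lt_v.
  by have := spB (inord u) (inord v) (connect_K4 _ _); rewrite connect_adjE /= !inordK.
rewrite connect_adjE.
by have /allP := spB _ (iota_ord u); apply; rewrite iota_ord.
Qed.

Definition trees : seq bitseq := Eval vm_compute in [seq b <- bitseqs 6 | spanning_tree_bits b].

Lemma treesE : trees = [seq b <- bitseqs 6 | spanning_tree_bits b].
Proof. by vm_compute. Qed.

Definition tree (i : nat) : bitseq := nth [::] trees i.

Lemma size_trees : size trees = 16.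
Proof. by []. Qed.

Lemma size_tree i : i < 16 -> size (tree i) = 6.
Proof.
have sizes : all (fun b => size b == 6) trees by [].
by move=> lt_i; apply/eqP/(allP sizes)/mem_nth; rewrite size_trees.
Qed.

Lemma spanning_tree_bits_tree i : i < 16 -> spanning_tree_bits (tree i).
Proof.
move=> lt_i; have := mem_nth [::] (lt_i : i < size trees).
by rewrite {2}treesE mem_filter => /andP[].
Qed.

(** * Exchange relations and facet certificates *)

Definition tree_sum (p q : nat) : seq nat :=
  [seq nth false (tree p) m + nth false (tree q) m | m <- iota 0 6].

(* [((p, q), (r, s))] records the exchange relation [chi_p + chi_q = chi_r + chi_s] between
   incidence vectors of trees. *)
Definition exchange := ((nat * nat) * (nat * nat))%type.

Definition is_exchange (x : exchange) : bool :=
  [&& x.1.1 < 16, x.1.2 < 16, x.2.1 < 16, x.2.2 < 16 &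
      tree_sum x.1.1 x.1.2 == tree_sum x.2.1 x.2.2].

Definition index_pairs : seq (nat * nat) := [seq (p, q) | p <- iota 0 16, q <- iota 0 16].

Definition exchanges : seq exchange := Eval vm_compute in
  [seq x <- [seq (pq, rs) | pq <- index_pairs, rs <- index_pairs] | is_exchange x].

Lemma exchangesE : exchanges =
  [seq x <- [seq (pq, rs) | pq <- index_pairs, rs <- index_pairs] | is_exchange x].
Proof. by vm_compute. Qed.

Lemma exchangeP x : x \in exchanges ->
  [/\ x.1.1 < 16, x.1.2 < 16, x.2.1 < 16, x.2.2 < 16 & tree_sum x.1.1 x.1.2 = tree_sum x.2.1 x.2.2].
Proof. by rewrite exchangesE mem_filter => /andP[/and5P[? ? ? ? /eqP]]. Qed.

(* The symmetric copies of these 45 exchanges carry no further information about zero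
   patterns, and leaving them out keeps the exhaustive check below fast. *)
Definition canonical_exchanges : seq exchange := Eval vm_compute in
  [seq x <- exchanges | [&& x.1.1 < x.1.2, x.2.1 < x.2.2 & x.1.1 < x.2.1]].

Lemma canonical_exchangesE : canonical_exchanges =
  [seq x <- exchanges | [&& x.1.1 < x.1.2, x.2.1 < x.2.2 & x.1.1 < x.2.1]].
Proof. by vm_compute. Qed.

Lemma canonical_exchanges_sub : {subset canonical_exchanges <= exchanges}.
Proof. by move=> x; rewrite canonical_exchangesE mem_filter => /andP[]. Qed.

Local Open Scope ring_scope.

(* Facets [0, 6) are [x_e >= 0], facets [6, 12) are [x_e <= 1], and facet [12 + v] is
   [x(T) <= 2] for the triangle [T] of [K_4] avoiding vertex [v]. *)
Definition facet_coefs (k : nat) : seq int :=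
  if (k < 6)%N then [seq (m == k)%:Z | m <- iota 0 6]
  else if (k < 12)%N then [seq - (m == (k - 6)%N)%:Z | m <- iota 0 6]
  else [seq - (~~ incident m (k - 12))%:Z | m <- iota 0 6].

Definition facet_const (k : nat) : int := if (k < 6)%N then 0 else if (k < 12)%N then 1 else 2.

Definition level (k i : nat) : int := facet_const k +
  foldr +%R 0 [seq nth 0 (facet_coefs k) m * (nth false (tree i) m : nat)%:Z | m <- iota 0 6].

Definition rep (k : nat) : nat := find (fun i => level k i == 1) (iota 0 16).

(* [grow] marks tree [i] once [chi_i = chi_r + chi_s - chi_q] for marked [q], [r], [s].
   Marking all trees from the zero trees of facet [k] and [rep k] certifies that these
   trees affinely span the whole configuration. *)
Definition grow (S : bitseq) : bitseq :=
  [seq nth false S i || has (fun x : exchange =>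
     [&& x.1.1 == i, nth false S x.1.2, nth false S x.2.1 & nth false S x.2.2]) exchanges
  | i <- iota 0 16].

Definition facet_seed (k : nat) : bitseq := [seq (level k i == 0) || (i == rep k) | i <- iota 0 16].

Lemma facet_certificate : all (fun k => [&& (rep k < 16)%N, level k (rep k) == 1,
    all (fun i => level k i \in [:: 0; 1; 2]) (iota 0 16) & all id (iter 16 grow (facet_seed k))])
  (iota 0 16).
Proof. by vm_compute. Qed.

Lemma facet_certificateP k : (k < 16)%N -> [/\ (rep k < 16)%N, level k (rep k) = 1,
  forall i, (i < 16)%N -> level k i \in [:: 0; 1; 2] &
  forall i, (i < 16)%N -> nth false (iter 16 grow (facet_seed k)) i].
Proof.
move=> lt_k; have /and4P[-> /eqP-> /allP levels /all_nthP solved] :=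
  allP facet_certificate k (etrans (mem_iota0 _ _) lt_k).
split=> // i lt_i; first by apply: levels; rewrite mem_iota0.
by apply: solved; rewrite size_map size_iota.
Qed.

Definition exchange_closed (S : bitseq) : bool := all (fun x : exchange =>
  (nth false S x.1.1 && nth false S x.1.2) == (nth false S x.2.1 && nth false S x.2.2))
  canonical_exchanges.

Lemma closed_pattern_cover : all (fun S => all id S ||
    has (fun k => all (fun i => nth false S i ==> (level k i == 0)) (iota 0 16)) (iota 0 16))
  [seq S <- bitseqs 16 | exchange_closed S].
Proof. by vm_compute. Qed.

Lemma triangle_levels : all (fun l => has (fun i => level 12 i == l) (iota 0 16)) [:: 0; 1; 2].
Proof. by vm_compute. Qed.

(** * Affine functions on the base configuration *)

Section BaseConfiguration.
Variable R : realType.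

Definition tree_vec (i : nat) : pt R K4_edge := fun e => (nth false (tree i) (eid e) : nat)%:R.

Lemma base_configurationE x :
  base_configuration K4_ends x <-> exists2 i, (i < 16)%N & x = tree_vec i.
Proof.
split=> [[B [/spanning_forestE spB ->]] | [i lt_i ->]].
  have B_tree : edge_bits B \in trees.
    by rewrite treesE mem_filter spB -(size_edge_bits B) mem_bitseqs.
  exists (index (edge_bits B) trees); first by rewrite -size_trees index_mem.
  apply: functional_extensionality => e.
  by rewrite /tree_vec /tree nth_index // nth_edge_bits ?eid_lt // eidK.
exists [set e | nth false (tree i) (eid e)]; split; last first.
  by apply: functional_extensionality => e; rewrite inE.
apply/spanning_forestE; suff -> : edge_bits [set e | nth false (tree i) (eid e)] = tree i.
  exact: spanning_tree_bits_tree.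
apply: (@eq_from_nth _ false); rewrite size_edge_bits ?size_tree // => m lt_m.
by rewrite nth_edge_bits // inE K4eK.
Qed.

Lemma aff_tree_vec a c i :
  aff a c (tree_vec i) = c + \sum_(m < 6) a (K4e m) * (nth false (tree i) m : nat)%:R.
Proof.
by rewrite /aff sum_K4_edges; congr (_ + _); apply: eq_bigr => m _; rewrite /tree_vec K4eK.
Qed.

Lemma aff_exchange a c x : x \in exchanges ->
  aff a c (tree_vec x.1.1) + aff a c (tree_vec x.1.2) =
  aff a c (tree_vec x.2.1) + aff a c (tree_vec x.2.2).
Proof.
case/exchangeP => _ _ _ _ sums; rewrite !aff_tree_vec [LHS]addrACA [RHS]addrACA -!big_split.
congr (_ + _).
apply: eq_bigr => m _; rewrite /= -!mulrDr -!natrD.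
by have := congr1 (nth 0%N ^~ m) sums; rewrite !(nth_map 0%N) ?size_iota // nth_iota // => ->.
Qed.

Definition exchange_additive (f : nat -> R) : Prop :=
  forall x, x \in exchanges -> f x.1.1 + f x.1.2 = f x.2.1 + f x.2.2.

Lemma iter_grow_sound (f g : nat -> R) (t : R) S n :
  exchange_additive f -> exchange_additive g -> (forall i, nth false S i -> f i = t * g i) ->
  forall i, nth false (iter n grow S) i -> f i = t * g i.
Proof.
move=> fA gA; elim: n S => [// | n IH] S solS i /=; move: {IH solS}(IH S solS) => solS.
case: (ltnP i 16) => [lt_i | ge_i]; last by rewrite nth_default ?size_map ?size_iota.
rewrite (nth_map 0%N) ?size_iota // nth_iota // => /orP[/solS // | /hasP[x xE]].
case/and4P=> /eqP xi /solS fq /solS fr /solS fs.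
have fx := fA x xE; have gx := gA x xE; rewrite xi in fx gx.
by rewrite -[f i](addrK (f x.1.2)) -[g i](addrK (g x.1.2)) fx gx fq fr fs mulrBr mulrDr.
Qed.

Definition facet_fun (k : nat) : K4_edge -> R := fun e => (nth 0 (facet_coefs k) (eid e))%:~R.

Lemma aff_facet k i : aff (facet_fun k) (facet_const k)%:~R (tree_vec i) = (level k i)%:~R.
Proof.
rewrite aff_tree_vec /level rmorphD foldrE big_map rmorph_sum; congr (_ + _).
rewrite -[iota 0 6]/(index_iota 0 6) big_mkord; apply: eq_bigr => m _.
by rewrite rmorphM /facet_fun K4eK.
Qed.

Lemma facet_proportional a c k : (k < 16)%N ->
  (forall i, (i < 16)%N -> level k i = 0 -> aff a c (tree_vec i) = 0) ->
  forall i, (i < 16)%N -> aff a c (tree_vec i) = aff a c (tree_vec (rep k)) * (level k i)%:~R.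
Proof.
move=> lt_k vanish i lt_i; have [_ rep1 _ solved] := facet_certificateP lt_k.
apply: (@iter_grow_sound (fun j => aff a c (tree_vec j)) (fun j => (level k j)%:~R) _
  (facet_seed k) 16) (solved i lt_i).
- by move=> x /(aff_exchange a c).
- by move=> x /(aff_exchange (facet_fun k) (facet_const k)%:~R); rewrite !aff_facet.
move=> j; case: (ltnP j 16) => [lt_j | ge_j]; last by rewrite nth_default ?size_map ?size_iota.
rewrite (nth_map 0%N) ?size_iota // nth_iota // add0n => /orP[/eqP lev0 | /eqP->].
  by rewrite vanish // lev0 mulr0.
by rewrite rep1 mulr1.
Qed.

Local Notation base_K4 := (@base_configuration R _ _ K4_ends).
Local Notation facet_set k :=
  (zero_set base_K4 (facet_fun k) (facet_const k)%:~R) (k in scope nat_scope).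

Lemma base_K4_tree_vec i : (i < 16)%N -> base_K4 (tree_vec i).
Proof. by move=> lt_i; apply/base_configurationE; exists i. Qed.

Lemma facet_nonneg k : (k < 16)%N -> nonneg_on base_K4 (facet_fun k) (facet_const k)%:~R.
Proof.
move=> lt_k x /base_configurationE[i lt_i ->]; rewrite aff_facet ler0z.
by have [_ _ /(_ i lt_i) + _] := facet_certificateP lt_k; rewrite !inE => /or3P[] /eqP->.
Qed.

Lemma facet_face k : (k < 16)%N -> is_face base_K4 (facet_set k).
Proof.
by move=> lt_k; exists (facet_fun k), (facet_const k)%:~R; split; [exact: facet_nonneg|].
Qed.

Lemma facet_proper k : (k < 16)%N -> ~ same_set (facet_set k) base_K4.
Proof.
move=> lt_k same; have [rep_lt rep1 _ _] := facet_certificateP lt_k.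
have [_] := proj2 (same (tree_vec (rep k))) (base_K4_tree_vec rep_lt).
by rewrite aff_facet rep1 => /eqP; rewrite intr_eq0.
Qed.

Lemma facet_fun_defining k : (k < 16)%N -> facet_defining base_K4 (facet_fun k) (facet_const k)%:~R.
Proof.
move=> lt_k; split; first exact: facet_nonneg.
split; [exact: facet_face | exact: facet_proper | ].
move=> F [a [c [_ F_zero]]] F_proper sub_F x /F_zero[Px zero_i].
have /base_configurationE[i lt_i xE] := Px; subst x; split=> //.
have vanish j : (j < 16)%N -> level k j = 0 -> aff a c (tree_vec j) = 0.
  move=> lt_j lev0; suff /F_zero[] : F (tree_vec j) by [].
  by apply: sub_F; split; [exact: base_K4_tree_vec | rewrite aff_facet lev0].
move: zero_i; rewrite (facet_proportional lt_k vanish lt_i) aff_facet => /eqP.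
rewrite mulf_eq0 intr_eq0 => /orP[/eqP t0 | /eqP-> //].
case: F_proper => y; split=> [/F_zero[] // | /base_configurationE[j lt_j ->]].
apply/F_zero; split; first exact: base_K4_tree_vec.
by rewrite (facet_proportional lt_k vanish lt_j) t0 mul0r.
Qed.

Definition zero_pattern a c : bitseq := [seq aff a c (tree_vec i) == 0 | i <- iota 0 16].

Lemma nth_zero_pattern a c i :
  (i < 16)%N -> nth false (zero_pattern a c) i = (aff a c (tree_vec i) == 0).
Proof. by move=> lt_i; rewrite (nth_map 0%N) ?size_iota // nth_iota. Qed.

Lemma zero_pattern_closed a c : nonneg_on base_K4 a c -> exchange_closed (zero_pattern a c).
Proof.
move=> nn; apply/allP => x /canonical_exchanges_sub xE; have [p q r s _] := exchangeP xE.
have nn_i i : (i < 16)%N -> 0 <= aff a c (tree_vec i) by move=> lt_i; apply/nn/base_K4_tree_vec.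
by rewrite !nth_zero_pattern // -!paddr_eq0 ?nn_i // aff_exchange.
Qed.

Lemma facet_defining_vanishes_on_facet_fun a c : facet_defining base_K4 a c ->
  exists2 k, (k < 16)%N & forall i, (i < 16)%N -> level k i = 0 -> aff a c (tree_vec i) = 0.
Proof.
move=> [nn [_ proper maximal]].
have pattern_in : zero_pattern a c \in bitseqs 16.
  by rewrite -[16%N](size_map (fun i => aff a c (tree_vec i) == 0) (iota 0 16)) mem_bitseqs.
have /allP/(_ (zero_pattern a c)) := closed_pattern_cover.
rewrite mem_filter zero_pattern_closed // pattern_in => /(_ isT)/orP[/all_nthP all_zero | /hasP[k]].
  case: proper => x; split=> [[] // | /base_configurationE[i lt_i ->]].
  split; first exact: base_K4_tree_vec.
  by apply/eqP; rewrite -nth_zero_pattern //; apply: all_zero; rewrite size_map size_iota.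
rewrite mem_iota0 => lt_k /allP sub_k; exists k => // i lt_i lev0.
have sub_zero : sub_set (zero_set base_K4 a c) (facet_set k).
  move=> x [Px zero_x]; split=> //; have /base_configurationE[j lt_j xE] := Px; subst x.
  have := sub_k j; rewrite mem_iota0 nth_zero_pattern // zero_x eqxx => /(_ lt_j)/eqP.
  by rewrite aff_facet => ->.
have zero_i : facet_set k (tree_vec i).
  by split; [exact: base_K4_tree_vec | rewrite aff_facet lev0].
by have [] := maximal _ (facet_face lt_k) (facet_proper lt_k) sub_zero _ zero_i.
Qed.

Lemma levelness_bound3_base_K4 : levelness_bound base_K4 3.
Proof.
move=> a c /facet_defining_vanishes_on_facet_fun[k lt_k vanish].
pose t := aff a c (tree_vec (rep k)).
exists [:: t * 0%:~R; t * 1%:~R; t * 2%:~R]; split=> // x /base_configurationE[i lt_i ->].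
rewrite (facet_proportional lt_k vanish lt_i) -/t.
have [_ _ /(_ i lt_i) + _] := facet_certificateP lt_k.
by rewrite !inE => /or3P[] /eqP->; rewrite eqxx ?orbT.
Qed.

Lemma levelness_bound_base_K4_ge3 k : levelness_bound base_K4 k -> (3 <= k)%N.
Proof.
move=> /(_ _ _ (facet_fun_defining (isT : 12 < 16)%N))[s [size_s values]].
apply: leq_trans size_s; apply: (@uniq_leq_size _ [:: 0%:~R; 1%:~R; 2%:~R]).
  by rewrite /= !inE !eqr_int.
move=> y; rewrite !inE => /or3P[] /eqP->; set l := (X in X%:~R).
all: have /allP/(_ l) := triangle_levels; rewrite !inE eqxx ?orbT => /(_ isT)/hasP[i].
all: by rewrite mem_iota0 => lt_i /eqP <-; rewrite -aff_facet; apply/values/base_K4_tree_vec.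
Qed.

End BaseConfiguration.

Theorem proposition3p2 (R : realType) :
  is_levelness (@base_configuration R _ _ K4_ends) 3.
Proof. by split; [exact: levelness_bound3_base_K4 | exact: levelness_bound_base_K4_ge3]. Qed.
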